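(* Let $a<b$, $k>0$, $\lambda\in(0,\pi/2]$, and $f\in C^3([a,b])$ with $f'(a)=f'(b)=0$. Then there is a constant $C$ (depending only on $f,k,\lambda,a,b$) such that for every sequence $\{\epsilon_n\}$ with $\epsilon_n\in J_n$, the unique solution $y_{\epsilon_n}$ of $\epsilon_n y''+ky=f(t)$ on $[a,b]$, $y'(a)=y'(b)=0$, satisfies $$\sup_{t\in[a,b]}\Big|y_{\epsilon_n}(t)-\frac{f(t)}{k}\Big|\le C\,\epsilon_n\quad\text{for all }n.$$
   Context: For a fixed constant $\lambda\in(0,\pi/2]$ and $n=0,1,2,\dots$ define the closed intervals $$J_n=\left[\,k\left(\frac{b-a}{(n+1)\pi-\lambda}\right)^2,\ k\left(\frac{b-a}{n\pi+\lambda}\right)^2\,\right].$$ Note that $\epsilon\in J_n$ iff $\sqrt{k/\epsilon}\,(b-a)\in[n\pi+\lambda,(n+1)\pi-\lambda]$. *)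

From Stdlib Require Import Reals Lra.
Open Scope R_scope.

Definition Icc (a b : R) (x : R) : Prop := a <= x <= b.

(* f has derivative l at x relative to the set D (one-sided at endpoints
   of an interval): difference quotients through points of D converge. *)
Definition deriv_within (D : R -> Prop) (f : R -> R) (x l : R) : Prop :=
  forall eps, 0 < eps -> exists delta, 0 < delta /\
    forall h, h <> 0 -> Rabs h < delta -> D (x + h) ->
      Rabs ((f (x + h) - f x) / h - l) < eps.

Definition cont_within (D : R -> Prop) (g : R -> R) (x : R) : Prop :=
  forall eps, 0 < eps -> exists delta, 0 < delta /\
    forall y, D y -> Rabs (y - x) < delta -> Rabs (g y - g x) < eps.

Definition C3_on (a b : R) (f f1 f2 f3 : R -> R) : Prop :=
  forall t, Icc a b t ->
    deriv_within (Icc a b) f t (f1 t) /\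
    deriv_within (Icc a b) f1 t (f2 t) /\
    deriv_within (Icc a b) f2 t (f3 t) /\
    cont_within (Icc a b) f3 t.

Definition J (k lam a b : R) (n : nat) (eps : R) : Prop :=
  k * ((b - a) / ((INR n + 1) * PI - lam)) ^ 2 <= eps <=
  k * ((b - a) / (INR n * PI + lam)) ^ 2.

Definition is_solution (a b eps k : R) (f y y1 y2 : R -> R) : Prop :=
  (forall t, Icc a b t ->
     deriv_within (Icc a b) y t (y1 t) /\
     deriv_within (Icc a b) y1 t (y2 t) /\
     eps * y2 t + k * y t = f t) /\
  y1 a = 0 /\ y1 b = 0.

From Stdlib Require Import Reals Lra Psatz.
From Coquelicot Require Import Coquelicot.
Open Scope R_scope.

(* Writing [om^2 = k/eps], the deviation [w = y - f/k] solves [w'' + om^2 w = g]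
   with [g = - f''/k] and Neumann boundary conditions.  The variation-of-constants
   quantity [w'(s) sin (om (t-s)) + (om w(s) - g(s)/om) cos (om (t-s))] has
   derivative [- g'(s) cos (om (t-s)) / om] in [s], so it moves by [O(1/om)] across
   [[a,b]].  Comparing its values at [s = a, b, t] and using [w'(a) = w'(b) = 0]
   bounds [X = om w - g/om] at [a] with the amplification [1/sin^2 (om (b-a))];
   for [eps] in [J_n] we have [|sin (om (b-a))| >= sin lam].  Hence [X = O(1/om)]
   and [w = O(1/om^2) = O(eps)]. *)

Lemma deriv_within_plus D (u v : R -> R) x u' v' :
  deriv_within D u x u' -> deriv_within D v x v' ->
  deriv_within D (fun s => u s + v s) x (u' + v').
Proof.
  intros Hu Hv eps Heps.
  destruct (Hu (eps / 2)) as [d1 [Hd1 H1]]; [lra|].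
  destruct (Hv (eps / 2)) as [d2 [Hd2 H2]]; [lra|].
  exists (Rmin d1 d2); split; [now apply Rmin_pos|].
  intros h Hh Hhd HD.
  specialize (H1 h Hh (Rlt_le_trans _ _ _ Hhd (Rmin_l _ _)) HD).
  specialize (H2 h Hh (Rlt_le_trans _ _ _ Hhd (Rmin_r _ _)) HD).
  replace ((u (x + h) + v (x + h) - (u x + v x)) / h - (u' + v'))
    with (((u (x + h) - u x) / h - u') + ((v (x + h) - v x) / h - v')) by (field; auto).
  eapply Rle_lt_trans; [apply Rabs_triang|]. lra.
Qed.

Lemma deriv_within_scal D (u : R -> R) x u' c :
  deriv_within D u x u' -> deriv_within D (fun s => c * u s) x (c * u').
Proof.
  intros Hu eps Heps.
  assert (Hc : 0 < Rabs c + 1) by (pose proof (Rabs_pos c); lra).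
  destruct (Hu (eps / (Rabs c + 1))) as [d [Hd H]]; [now apply Rdiv_lt_0_compat|].
  exists d; split; [exact Hd|].
  intros h Hh Hhd HD. specialize (H h Hh Hhd HD).
  replace ((c * u (x + h) - c * u x) / h - c * u')
    with (c * ((u (x + h) - u x) / h - u')) by (field; auto).
  rewrite Rabs_mult.
  apply (Rmult_lt_compat_l (Rabs c + 1)) in H; [|exact Hc].
  replace ((Rabs c + 1) * (eps / (Rabs c + 1))) with eps in H by (field; lra).
  pose proof (Rabs_pos ((u (x + h) - u x) / h - u')). nra.
Qed.

Lemma deriv_within_cont_within D F x l : deriv_within D F x l -> cont_within D F x.
Proof.
  intros H eps Heps.
  assert (Hl : 0 < Rabs l + 1) by (pose proof (Rabs_pos l); lra).
  destruct (H 1 Rlt_0_1) as [d [Hd Hq]].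
  exists (Rmin d (eps / (Rabs l + 1))); split.
  { apply Rmin_pos; [exact Hd | now apply Rdiv_lt_0_compat]. }
  intros y Dy Hy.
  destruct (Req_dec y x) as [->|Hne].
  { now rewrite Rminus_eq_0, Rabs_R0. }
  specialize (Hq (y - x) ltac:(lra) (Rlt_le_trans _ _ _ Hy (Rmin_l _ _))).
  replace (x + (y - x)) with y in Hq by ring. specialize (Hq Dy).
  set (q := (F y - F x) / (y - x)) in Hq.
  replace (F y - F x) with (q * (y - x)) by (unfold q; field; lra).
  rewrite Rabs_mult.
  assert (Hql : Rabs q <= Rabs l + 1).
  { replace q with ((q - l) + l) by ring. eapply Rle_trans; [apply Rabs_triang|]. lra. }
  assert (Hye : (Rabs l + 1) * Rabs (y - x) < eps).
  { apply (Rmult_lt_compat_l (Rabs l + 1)) in Hy; [|exact Hl].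
    eapply Rlt_le_trans; [exact Hy|].
    rewrite Rmult_min_distr_l by lra. etransitivity; [apply Rmin_r|]. right; field; lra. }
  pose proof (Rabs_pos (y - x)). pose proof (Rabs_pos q). nra.
Qed.

Lemma deriv_within_is_derive a b F x l :
  a < x < b -> deriv_within (Icc a b) F x l -> is_derive F x l.
Proof.
  intros Hx H. apply is_derive_Reals. intros eps Heps.
  destruct (H eps Heps) as [d [Hd Hq]].
  assert (Hp : 0 < Rmin d (Rmin (x - a) (b - x))) by (repeat apply Rmin_pos; lra).
  exists (mkposreal _ Hp). intros h Hh Hhd. simpl in Hhd.
  pose proof (Rmin_l d (Rmin (x - a) (b - x))). pose proof (Rmin_r d (Rmin (x - a) (b - x))).
  pose proof (Rmin_l (x - a) (b - x)). pose proof (Rmin_r (x - a) (b - x)).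
  apply Hq; [exact Hh | lra |].
  unfold Icc. unfold Rabs in Hhd; destruct Rcase_abs; lra.
Qed.

(* Projection onto [a,b]: composing with it turns continuity relative to [a,b]
   into ordinary continuity on R, which is what the mean value theorem asks for. *)
Definition clamp (a b x : R) : R := Rmax a (Rmin b x).

Lemma clamp_Icc a b x : a <= b -> Icc a b (clamp a b x).
Proof. intros H; unfold clamp, Icc, Rmax, Rmin; repeat destruct Rle_dec; lra. Qed.

Lemma clamp_id a b x : Icc a b x -> clamp a b x = x.
Proof. unfold clamp, Icc, Rmax, Rmin; intros H; repeat destruct Rle_dec; lra. Qed.

Lemma clamp_1_lipschitz a b x y :
  a <= b -> Rabs (clamp a b y - clamp a b x) <= Rabs (y - x).
Proof.
  intros H; unfold clamp, Rmax, Rmin.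
  repeat destruct Rle_dec; unfold Rabs; repeat destruct Rcase_abs; lra.
Qed.

Lemma continuity_pt_clamp a b F x : a <= b ->
  (forall y, Icc a b y -> cont_within (Icc a b) F y) ->
  continuity_pt (fun x => F (clamp a b x)) x.
Proof.
  intros Hab HF eps Heps.
  destruct (HF (clamp a b x) (clamp_Icc a b x Hab) eps Heps) as [d [Hd Hy]].
  exists d; split; [exact Hd|]. intros z [_ Hz]. simpl in *; unfold R_dist in *.
  apply Hy; [now apply clamp_Icc|].
  eapply Rle_lt_trans; [now apply clamp_1_lipschitz | exact Hz].
Qed.

Lemma cont_within_bounded a b F : a <= b ->
  (forall x, Icc a b x -> cont_within (Icc a b) F x) ->
  exists M, forall x, Icc a b x -> Rabs (F x) <= M.
Proof.
  intros Hab HF.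
  destruct (continuity_ab_maj (fun x => Rabs (F (clamp a b x))) a b Hab) as [x0 [HM _]].
  - intros c _. apply (continuity_pt_comp (fun x => F (clamp a b x)) Rabs).
    + now apply continuity_pt_clamp.
    + apply Rcontinuity_abs.
  - exists (Rabs (F (clamp a b x0))). intros x Hx.
    specialize (HM x Hx). now rewrite clamp_id in HM.
Qed.

Lemma Icc_lipschitz_of_deriv_bound a b F F' M s t :
  a <= s -> s <= t -> t <= b ->
  (forall x, a < x < b -> is_derive F x (F' x)) ->
  (forall x, Icc a b x -> Rabs (F' x) <= M) ->
  (forall x, continuity_pt (fun x => F (clamp a b x)) x) ->
  Rabs (F t - F s) <= M * (t - s).
Proof.
  intros Has Hst Htb HD HM HC.
  destruct (Req_dec s t) as [<-|Hne].
  { rewrite !Rminus_eq_0, Rabs_R0, Rmult_0_r. lra. }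
  destruct (MVT_gen (fun x => F (clamp a b x)) s t F') as [c [Hc E]].
  - rewrite Rmin_left, Rmax_right by lra. intros x Hx.
    apply is_derive_ext_loc with F; [|apply HD; lra].
    apply locally_interval with (Finite a) (Finite b); simpl; try lra.
    intros y Hy1 Hy2. rewrite clamp_id; [reflexivity | unfold Icc; lra].
  - intros; apply HC.
  - rewrite Rmin_left, Rmax_right in Hc by lra.
    rewrite !clamp_id in E by (unfold Icc; lra).
    rewrite E, Rabs_mult, (Rabs_right (t - s)) by lra.
    apply Rmult_le_compat_r; [lra|]. apply HM. unfold Icc; lra.
Qed.

Lemma Rabs_cos_le_1 x : Rabs (cos x) <= 1.
Proof. apply Rabs_le, COS_bound. Qed.

Lemma Rabs_sin_add_INR_mul_PI n y : Rabs (sin (y + INR n * PI)) = Rabs (sin y).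
Proof.
  induction n as [|n IH].
  - simpl. now rewrite Rmult_0_l, Rplus_0_r.
  - rewrite S_INR. replace (y + (INR n + 1) * PI) with ((y + INR n * PI) + PI) by ring.
    now rewrite neg_sin, Rabs_Ropp.
Qed.

Lemma sin_le_Rabs_sin_away_from_multiples n lam x : 0 < lam <= PI / 2 ->
  INR n * PI + lam <= x <= (INR n + 1) * PI - lam -> sin lam <= Rabs (sin x).
Proof.
  intros Hl Hx. pose proof PI_RGT_0.
  replace x with ((x - INR n * PI) + INR n * PI) by ring.
  rewrite Rabs_sin_add_INR_mul_PI.
  set (y := x - INR n * PI).
  assert (Hy : lam <= y <= PI - lam) by (unfold y; lra).
  rewrite Rabs_right by (apply Rle_ge, sin_ge_0; lra).
  destruct (Rle_dec y (PI / 2)).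
  - apply sin_incr_1; lra.
  - rewrite <- (sin_PI_x y). apply sin_incr_1; lra.
Qed.

Lemma sqrt_ratio_bounds k eps q D : 0 < k -> 0 < eps -> 0 < q -> 0 < D ->
  (eps <= k * (q / D) ^ 2 -> D <= sqrt (k / eps) * q) /\
  (k * (q / D) ^ 2 <= eps -> sqrt (k / eps) * q <= D).
Proof.
  intros Hk Heps Hq HD.
  set (om := sqrt (k / eps)).
  assert (Hom : 0 < om) by (apply sqrt_lt_R0, Rdiv_lt_0_compat; assumption).
  assert (Hom2 : om * om = k / eps) by (apply sqrt_sqrt; apply Rlt_le, Rdiv_lt_0_compat; assumption).
  assert (E : k * (q / D) ^ 2 = eps * ((om * q) / D) ^ 2).
  { replace k with (eps * (om * om)) at 1 by (rewrite Hom2; field; lra). field; lra. }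
  rewrite E.
  assert (Hr : 0 < om * q / D) by (apply Rdiv_lt_0_compat; [apply Rmult_lt_0_compat|]; assumption).
  assert (Hd : om * q = (om * q / D) * D) by (field; lra).
  set (r := om * q / D) in *.
  split; intros H.
  - assert (1 <= r ^ 2) by (apply Rmult_le_reg_l with eps; lra).
    assert (1 <= r) by nra. nra.
  - assert (r ^ 2 <= 1) by (apply Rmult_le_reg_l with eps; lra).
    assert (r <= 1) by nra. nra.
Qed.

Lemma J_frequency_bounds k lam a b n eps : a < b -> 0 < k -> 0 < lam < PI ->
  J k lam a b n eps ->
  0 < eps /\
  INR n * PI + lam <= sqrt (k / eps) * (b - a) <= (INR n + 1) * PI - lam.
Proof.
  intros Hab Hk Hlam [Hlo Hhi]. pose proof (pos_INR n).
  assert (D1 : 0 < (INR n + 1) * PI - lam) by nra.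
  assert (D2 : 0 < INR n * PI + lam) by nra.
  assert (Heps : 0 < eps).
  { eapply Rlt_le_trans; [|exact Hlo].
    apply Rmult_lt_0_compat; [exact Hk|]. apply pow_lt, Rdiv_lt_0_compat; lra. }
  split; [exact Heps|]. split.
  - apply (sqrt_ratio_bounds k eps (b - a) _ Hk Heps ltac:(lra) D2). exact Hhi.
  - apply (sqrt_ratio_bounds k eps (b - a) _ Hk Heps ltac:(lra) D1). exact Hlo.
Qed.

Lemma reflection_bound c s S e X Y : c ^ 2 + s ^ 2 = 1 -> 0 <= S -> S <= Rabs s ->
  Rabs (Y - c * X) <= e -> Rabs (c * Y - X) <= e -> S ^ 2 * Rabs X <= 2 * e.
Proof.
  intros Hcs HS HSs H1 H2.
  assert (Hc : Rabs c <= 1) by (apply Rabs_le; nra).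
  assert (Id : s ^ 2 * X = - (c * Y - X) + c * (Y - c * X)) by (replace (s ^ 2) with (1 - c ^ 2) by lra; ring).
  assert (Hs : Rabs (s ^ 2 * X) <= 2 * e).
  { rewrite Id. eapply Rle_trans; [apply Rabs_triang|]. rewrite Rabs_Ropp, Rabs_mult.
    pose proof (Rabs_pos (Y - c * X)). pose proof (Rabs_pos c). nra. }
  rewrite Rabs_mult, <- RPow_abs in Hs.
  assert (S ^ 2 <= Rabs s ^ 2) by (apply pow_incr; lra).
  pose proof (Rabs_pos X). nra.
Qed.

Section ForcedOscillator.

Variables (a b om m0 m1 S : R) (w w1 g g1 : R -> R).

Hypothesis Hab : a < b.
Hypothesis Hom : 0 < om.
Hypothesis Hw : forall x, Icc a b x -> deriv_within (Icc a b) w x (w1 x).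
Hypothesis Hw1 : forall x, Icc a b x -> deriv_within (Icc a b) w1 x (- om ^ 2 * w x + g x).
Hypothesis Hg : forall x, Icc a b x -> deriv_within (Icc a b) g x (g1 x).
Hypothesis Hg_bound : forall x, Icc a b x -> Rabs (g x) <= m0.
Hypothesis Hg1_bound : forall x, Icc a b x -> Rabs (g1 x) <= m1.

(* Variation of constants for [w'' + om^2 w = g]. *)
Definition vc (t s : R) : R :=
  w1 s * sin (om * (t - s)) + (om * w s - g s / om) * cos (om * (t - s)).

Lemma vc_is_derive t x : a < x < b ->
  is_derive (vc t) x (- g1 x * cos (om * (t - x)) / om).
Proof.
  intros Hx.
  pose proof (deriv_within_is_derive a b w x _ Hx (Hw x ltac:(unfold Icc; lra))) as H0.
  pose proof (deriv_within_is_derive a b w1 x _ Hx (Hw1 x ltac:(unfold Icc; lra))) as H1.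
  pose proof (deriv_within_is_derive a b g x _ Hx (Hg x ltac:(unfold Icc; lra))) as H2.
  unfold vc. auto_derive.
  - repeat split; eexists; eassumption.
  - replace (Derive (fun s => w s) x) with (w1 x) by (symmetry; now apply is_derive_unique).
    replace (Derive (fun s => w1 s) x) with (- om ^ 2 * w x + g x)
      by (symmetry; now apply is_derive_unique).
    replace (Derive (fun s => g s) x) with (g1 x) by (symmetry; now apply is_derive_unique).
    replace (t + - x) with (t - x) by ring. field. lra.
Qed.

Lemma vc_continuity_pt_clamp t x : continuity_pt (fun x => vc t (clamp a b x)) x.
Proof.
  assert (Hab' : a <= b) by lra.
  assert (Cw : forall F F', (forall y, Icc a b y -> deriv_within (Icc a b) F y (F' y)) ->
             continuity_pt (fun x => F (clamp a b x)) x).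
  { intros F F' HF. apply continuity_pt_clamp; [exact Hab'|].
    intros y Hy. eapply deriv_within_cont_within, HF, Hy. }
  assert (Ccl : continuity_pt (fun x => clamp a b x) x).
  { apply (continuity_pt_clamp a b (fun x => x) x Hab').
    intros y _ eps He. exists eps; split; auto. }
  assert (Ctrig : forall h : R -> R, continuity h ->
             continuity_pt (fun x => h (om * (t - clamp a b x))) x).
  { intros h Hh. apply (continuity_pt_comp (fun x => clamp a b x) (fun s => h (om * (t - s)))); [exact Ccl|].
    apply (continuity_pt_comp (fun s => om * (t - s)) h); [|apply Hh].
    apply derivable_continuous_pt. reg. }
  unfold vc. apply continuity_pt_plus; apply continuity_pt_mult.
  - exact (Cw w1 _ Hw1).
  - exact (Ctrig sin continuity_sin).
  - apply continuity_pt_minus; [apply continuity_pt_mult|].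
    + apply continuity_pt_const. intros ? ?; reflexivity.
    + exact (Cw w w1 Hw).
    + unfold Rdiv. apply continuity_pt_mult; [exact (Cw g g1 Hg)|].
      apply continuity_pt_const. intros ? ?; reflexivity.
  - exact (Ctrig cos continuity_cos).
Qed.

Lemma vc_lipschitz t s1 s2 : a <= s1 -> s1 <= s2 -> s2 <= b ->
  Rabs (vc t s2 - vc t s1) <= m1 / om * (s2 - s1).
Proof.
  intros H1 H2 H3.
  apply (Icc_lipschitz_of_deriv_bound a b (vc t) (fun x => - g1 x * cos (om * (t - x)) / om));
    try assumption.
  - apply vc_is_derive.
  - intros x Hx. unfold Rdiv.
    rewrite !Rabs_mult, Rabs_Ropp, (Rabs_inv om), (Rabs_right om) by lra.
    apply Rmult_le_compat_r; [left; now apply Rinv_0_lt_compat|].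
    pose proof (Rabs_cos_le_1 (om * (t - x))). pose proof (Rabs_pos (cos (om * (t - x)))).
    pose proof (Hg1_bound x Hx). pose proof (Rabs_pos (g1 x)). nra.
  - apply vc_continuity_pt_clamp.
Qed.

Theorem forced_oscillator_bound t : 0 < S -> S <= Rabs (sin (om * (b - a))) ->
  w1 a = 0 -> w1 b = 0 -> Icc a b t ->
  Rabs (w t) <= (m1 * (b - a) * (1 + 2 / S ^ 2) + m0) / om ^ 2.
Proof.
  intros HS HSs Ha Hb Ht.
  set (X := fun s => om * w s - g s / om).
  set (e := m1 / om * (b - a)).
  assert (Hdiag : forall t, vc t t = X t).
  { intros t0. unfold vc, X. rewrite Rminus_eq_0, Rmult_0_r, sin_0, cos_0. ring. }
  assert (Hend : forall t s, w1 s = 0 -> vc t s = cos (om * (t - s)) * X s).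
  { intros t0 s Hs. unfold vc, X. rewrite Hs. ring. }
  assert (Hrefl : S ^ 2 * Rabs (X a) <= 2 * e).
  { apply (reflection_bound (cos (om * (b - a))) (sin (om * (b - a))) S e (X a) (X b));
      [rewrite Rplus_comm, <- !Rsqr_pow2; apply sin2_cos2 | lra | exact HSs | |].
    - rewrite <- (Hdiag b), <- (Hend b a Ha). apply vc_lipschitz; lra.
    - replace (cos (om * (b - a))) with (cos (om * (a - b)))
        by (rewrite <- cos_neg; f_equal; ring).
      rewrite <- (Hdiag a), <- (Hend a b Hb).
      apply vc_lipschitz; lra. }
  assert (HXt : Rabs (X t) <= e * (1 + 2 / S ^ 2)).
  { assert (HXa : Rabs (X a) <= 2 * e / S ^ 2).
    { apply Rmult_le_reg_l with (S ^ 2); [now apply pow_lt|].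
      replace (S ^ 2 * (2 * e / S ^ 2)) with (2 * e) by (field; lra). exact Hrefl. }
    assert (Hvar : Rabs (X t - cos (om * (t - a)) * X a) <= e).
    { rewrite <- Hdiag, <- (Hend t a Ha). unfold Icc in Ht.
      eapply Rle_trans; [apply vc_lipschitz; lra|]. unfold e.
      apply Rmult_le_compat_l; [apply Rdiv_le_0_compat|]; try lra.
      eapply Rle_trans; [apply Rabs_pos | apply (Hg1_bound a); unfold Icc; lra]. }
    replace (X t) with ((X t - cos (om * (t - a)) * X a) + cos (om * (t - a)) * X a) by ring.
    eapply Rle_trans; [apply Rabs_triang|]. rewrite Rabs_mult.
    pose proof (Rabs_cos_le_1 (om * (t - a))). pose proof (Rabs_pos (X a)).
    pose proof (Rabs_pos (cos (om * (t - a)))).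
    replace (e * (1 + 2 / S ^ 2)) with (e + 2 * e / S ^ 2) by (field; lra). nra. }
  assert (Hgt : Rabs (g t / om) <= m0 / om).
  { unfold Rdiv. rewrite Rabs_mult, (Rabs_inv om), (Rabs_right om) by lra.
    apply Rmult_le_compat_r; [left; now apply Rinv_0_lt_compat | now apply Hg_bound]. }
  replace (w t) with ((X t + g t / om) / om) by (unfold X; field; lra).
  unfold Rdiv at 1. rewrite Rabs_mult, (Rabs_inv om), (Rabs_right om) by lra.
  replace ((m1 * (b - a) * (1 + 2 / S ^ 2) + m0) / om ^ 2)
    with ((e * (1 + 2 / S ^ 2) + m0 / om) * / om) by (unfold e; field; lra).
  apply Rmult_le_compat_r; [left; now apply Rinv_0_lt_compat|].
  eapply Rle_trans; [apply Rabs_triang | lra].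
Qed.

End ForcedOscillator.

Lemma solution_deviation_bound a b k eps S M2 M3 (f f1 f2 f3 y y1 y2 : R -> R) t :
  a < b -> 0 < k -> 0 < eps ->
  C3_on a b f f1 f2 f3 -> f1 a = 0 -> f1 b = 0 ->
  (forall x, Icc a b x -> Rabs (f2 x) <= M2) ->
  (forall x, Icc a b x -> Rabs (f3 x) <= M3) ->
  0 < S -> S <= Rabs (sin (sqrt (k / eps) * (b - a))) ->
  is_solution a b eps k f y y1 y2 -> Icc a b t ->
  Rabs (y t - f t / k) <= (M3 / k * (b - a) * (1 + 2 / S ^ 2) + M2 / k) / k * eps.
Proof.
  intros Hab Hk Heps hf hfa hfb HM2 HM3 HS HSs [Hsol [Hya Hyb]] Ht.
  set (om := sqrt (k / eps)) in HSs.
  assert (Hom : 0 < om) by (apply sqrt_lt_R0, Rdiv_lt_0_compat; assumption).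
  assert (Hom2 : om ^ 2 = k / eps).
  { rewrite <- Rsqr_pow2. apply Rsqr_sqrt, Rlt_le, Rdiv_lt_0_compat; assumption. }
  assert (Hscal : forall F M x, Icc a b x -> Rabs (F x) <= M -> Rabs (- / k * F x) <= M / k).
  { intros F M x _ HF. rewrite Rabs_mult, Rabs_Ropp, Rabs_inv, (Rabs_right k) by lra.
    unfold Rdiv. rewrite Rmult_comm. apply Rmult_le_compat_r; [left; now apply Rinv_0_lt_compat | exact HF]. }
  pose proof (forced_oscillator_bound a b om (M2 / k) (M3 / k) S
    (fun s => y s + - / k * f s) (fun s => y1 s + - / k * f1 s)
    (fun s => - / k * f2 s) (fun s => - / k * f3 s)) as Hbound.
  replace (y t - f t / k) with (y t + - / k * f t) by (field; lra).
  replace ((M3 / k * (b - a) * (1 + 2 / S ^ 2) + M2 / k) / k * eps)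
    with ((M3 / k * (b - a) * (1 + 2 / S ^ 2) + M2 / k) / om ^ 2) by (rewrite Hom2; field; lra).
  apply Hbound; clear Hbound; try assumption.
  - intros x Hx. apply deriv_within_plus; [apply (Hsol x Hx) | apply deriv_within_scal, (hf x Hx)].
  - intros x Hx. destruct (Hsol x Hx) as (_ & Hy1 & Hode).
    replace (- om ^ 2 * (y x + - / k * f x) + - / k * f2 x) with (y2 x + - / k * f2 x).
    + apply deriv_within_plus; [exact Hy1 | apply deriv_within_scal, (hf x Hx)].
    + replace (y2 x) with ((f x - k * y x) / eps)
        by (apply Rmult_eq_reg_l with eps; [field_simplify; lra | lra]).
      rewrite Hom2. field. lra.
  - intros x Hx. apply deriv_within_scal, (hf x Hx).
  - intros x Hx. now apply Hscal, HM2.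
  - intros x Hx. now apply Hscal, HM3.
  - rewrite Hya, hfa. ring.
  - rewrite Hyb, hfb. ring.
Qed.

Theorem mainTheorem4 (a b k lam : R) (f f1 f2 f3 : R -> R)
  (hab : a < b) (hk : 0 < k) (hlam : 0 < lam <= PI / 2)
  (hf : C3_on a b f f1 f2 f3) (hfa : f1 a = 0) (hfb : f1 b = 0) :
  exists C : R,
    forall epsn : nat -> R, (forall n, J k lam a b n (epsn n)) ->
    forall n (y y1 y2 : R -> R), is_solution a b (epsn n) k f y y1 y2 ->
    forall t, Icc a b t -> Rabs (y t - f t / k) <= C * epsn n.
Proof.
  pose proof PI_RGT_0.
  destruct (cont_within_bounded a b f2 ltac:(lra)) as [M2 HM2].
  { intros x Hx. apply deriv_within_cont_within with (f3 x), (hf x Hx). }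
  destruct (cont_within_bounded a b f3 ltac:(lra)) as [M3 HM3].
  { intros x Hx. apply (hf x Hx). }
  set (S := sin lam).
  assert (HS : 0 < S) by (apply sin_gt_0; lra).
  exists ((M3 / k * (b - a) * (1 + 2 / S ^ 2) + M2 / k) / k).
  intros epsn HJ n y y1 y2 Hsol t Ht.
  destruct (J_frequency_bounds k lam a b n (epsn n) hab hk ltac:(lra) (HJ n)) as [Heps Hfreq].
  apply (solution_deviation_bound a b k (epsn n) S M2 M3 f f1 f2 f3 y y1 y2); try assumption.
  now apply (sin_le_Rabs_sin_away_from_multiples n).
Qed.
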